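(* For every positive integer $n$, the sets $\mathcal{GEN}_n^+\subset\mathcal{GEN}_n$ are dense $G_\delta$ subsets of $\mathcal G_0^n$.
   Context: $\mathcal G$ is the group of strictly increasing continuous maps $f:[-1,1]\to[-1,1]$ with $f(\pm1)=\pm1$, with the sup-norm topology; $i$ is the identity; $\mathcal G_0=\{f\in\mathcal G:\int_{-1}^1f=0\}$. $f^e(t)=\tfrac12(f(t)+f(-t))$; $Q(f,g)=\int_{-1}^1f(g^{-1}(t))\,dt$. $\mathcal{GEN}_n$ is the set of $(f_1,\dots,f_n)\in\mathcal G_0^n$ with $\{i,f_1,\dots,f_n\}$ linearly independent and $Q(f_i,f_j)\ne0$ for all $i\neq j$; $\mathcal{GEN}_n^+$ is the set of $(f_1,\dots,f_n)\in\mathcal G_0^n$ with $\{f_1^e,\dots,f_n^e\}$ linearly independent and $Q(f_i,f_j)\neq0$ for all $i\ne j$. *)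

From Stdlib Require Import Reals Lra ClassicalEpsilon.
From Coquelicot Require Import Coquelicot.
Open Scope R_scope.

(* A function on [-1,1] is represented by f : R -> R; only values on
   [-1,1] matter. An n-tuple (f_1,...,f_n) is F : nat -> (R -> R),
   with components F 0, ..., F (n-1). *)
Definition interval_11 (t : R) : Prop := -1 <= t <= 1.

Definition cont_on_11 (f : R -> R) : Prop :=
  forall x, interval_11 x -> forall eps, 0 < eps ->
    exists delta, 0 < delta /\
      forall y, interval_11 y -> Rabs (y - x) < delta -> Rabs (f y - f x) < eps.

Definition in_G (f : R -> R) : Prop :=
  (forall s t, interval_11 s -> interval_11 t -> s < t -> f s < f t) /\
  cont_on_11 f /\ f (-1) = -1 /\ f 1 = 1.

Definition in_G0 (f : R -> R) : Prop := in_G f /\ RInt f (-1) 1 = 0.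

Definition even_part (f : R -> R) : R -> R := fun t => (f t + f (- t)) / 2.

Definition ginv (g : R -> R) (t : R) : R :=
  epsilon (inhabits 0) (fun s => interval_11 s /\ g s = t).

Definition Q (f g : R -> R) : R := RInt (fun t => f (ginv g t)) (-1) 1.

Fixpoint lin_comb (n : nat) (c : nat -> R) (F : nat -> R -> R) (t : R) : R :=
  match n with
  | O => 0
  | S m => lin_comb m c F t + c m * F m t
  end.

Definition lin_indep_with_id (n : nat) (F : nat -> R -> R) : Prop :=
  forall (c0 : R) (c : nat -> R),
    (forall t, interval_11 t -> c0 * t + lin_comb n c F t = 0) ->
    c0 = 0 /\ forall i, (i < n)%nat -> c i = 0.

Definition lin_indep (n : nat) (F : nat -> R -> R) : Prop :=
  forall c : nat -> R,
    (forall t, interval_11 t -> lin_comb n c F t = 0) ->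
    forall i, (i < n)%nat -> c i = 0.

Definition in_G0n (n : nat) (F : nat -> R -> R) : Prop :=
  forall i, (i < n)%nat -> in_G0 (F i).

Definition Q_nonzero (n : nat) (F : nat -> R -> R) : Prop :=
  forall i j, (i < n)%nat -> (j < n)%nat -> i <> j -> Q (F i) (F j) <> 0.

Definition GEN (n : nat) (F : nat -> R -> R) : Prop :=
  in_G0n n F /\ lin_indep_with_id n F /\ Q_nonzero n F.

Definition GENplus (n : nat) (F : nat -> R -> R) : Prop :=
  in_G0n n F /\ lin_indep n (fun i => even_part (F i)) /\ Q_nonzero n F.

Definition sup_close (eps : R) (f g : R -> R) : Prop :=
  exists r, r < eps /\ forall t, interval_11 t -> Rabs (f t - g t) <= r.

(* ball of the product (max of sup-norms) metric on n-tuples *)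
Definition ball_n (n : nat) (eps : R) (F H : nat -> R -> R) : Prop :=
  forall i, (i < n)%nat -> sup_close eps (F i) (H i).

Definition open_in_G0n (n : nat) (U : (nat -> R -> R) -> Prop) : Prop :=
  forall F, U F -> in_G0n n F /\
    exists eps, 0 < eps /\ forall H, in_G0n n H -> ball_n n eps F H -> U H.

Definition Gdelta_in_G0n (n : nat) (S : (nat -> R -> R) -> Prop) : Prop :=
  exists U : nat -> (nat -> R -> R) -> Prop,
    (forall k, open_in_G0n n (U k)) /\
    forall F, S F <-> (in_G0n n F /\ forall k, U k F).

Definition dense_in_G0n (n : nat) (S : (nat -> R -> R) -> Prop) : Prop :=
  (forall F, S F -> in_G0n n F) /\
  forall F eps, in_G0n n F -> 0 < eps -> exists H, S H /\ ball_n n eps F H.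

(* GEN and GEN+ are open, hence G_delta. Linear independence of finitely many bounded
   functions survives small sup-norm perturbations, because the l^1-norm of the coefficients
   of a combination is bounded by a multiple of its sup-norm; and Q is continuous, being
   Lipschitz in its first argument and antisymmetric (Q(f,g) + Q(g,f) = 0 by summation by
   parts). GEN+ lies in GEN: a relation with the identity, averaged at t and -t, becomes a
   relation among the even parts.
   For density, a point of GEN+ is moved to any target one coordinate at a time along
   segments (1-l) F_k + l H_k inside G_0; each defining condition fails for at most one l,
   since Q is affine in its first argument and independence can be lost only once along a
   line. A first point of GEN+ comes from an explicit pair of piecewise linear maps with
   Q = -1/144, extended one coordinate at a time by narrow bumps whose even parts leave the
   span of the previous ones. *)

From Stdlib Require Import Reals Lra Lia ClassicalEpsilon Classical.
From Coquelicot Require Import Coquelicot.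
Open Scope R_scope.

Ltac solve_interval_11 := unfold interval_11 in *; lra.

Lemma interval_11_opp t : interval_11 t -> interval_11 (- t).
Proof. solve_interval_11. Qed.

Lemma Rabs_sub_le a b : Rabs (a - b) <= Rabs a + Rabs b.
Proof. unfold Rminus. rewrite <- (Rabs_Ropp b). apply Rabs_triang. Qed.

(** * Continuity and integrability on [-1,1] *)

Definition clamp (t : R) : R := Rmax (-1) (Rmin 1 t).

Lemma clamp_in t : interval_11 (clamp t).
Proof. unfold clamp, interval_11, Rmax, Rmin; repeat destruct Rle_dec; lra. Qed.

Lemma clamp_id t : interval_11 t -> clamp t = t.
Proof. unfold clamp, interval_11, Rmax, Rmin; repeat destruct Rle_dec; lra. Qed.

Lemma Rabs_clamp_sub x y : Rabs (clamp y - clamp x) <= Rabs (y - x).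
Proof.
  unfold clamp, Rmax, Rmin; repeat destruct Rle_dec; unfold Rabs;
  repeat destruct Rcase_abs; lra.
Qed.

Lemma continuity_pt_clamp f x : cont_on_11 f -> continuity_pt (fun t => f (clamp t)) x.
Proof.
  intros Hf eps Heps.
  destruct (Hf (clamp x) (clamp_in x) eps Heps) as [d [Hd Hfd]].
  exists d; split; [lra|]. intros y [_ Hy]; simpl in *; unfold R_dist in *.
  apply Hfd; [apply clamp_in|]. eapply Rle_lt_trans; [apply Rabs_clamp_sub | exact Hy].
Qed.

Lemma cont_on_11_of_continuity_pt f :
  (forall x, interval_11 x -> continuity_pt f x) -> cont_on_11 f.
Proof.
  intros Hf x Hx eps Heps. destruct (Hf x Hx eps Heps) as [d [Hd Hfd]].
  exists d; split; [lra|]. intros y _ Hy.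
  destruct (Req_dec y x) as [->|Hne]; [rewrite Rminus_diag, Rabs_R0; lra|].
  apply (Hfd y). split; [split; [exact I | congruence] | exact Hy].
Qed.

Lemma cont_on_11_ext f g :
  (forall t, interval_11 t -> f t = g t) -> cont_on_11 f -> cont_on_11 g.
Proof.
  intros Hfg Hf x Hx eps Heps. destruct (Hf x Hx eps Heps) as [d [Hd Hfd]].
  exists d; split; [lra|]. intros y Hy Hyx. rewrite <- !Hfg by assumption. auto.
Qed.

Lemma cont_on_11_lin a b f g :
  cont_on_11 f -> cont_on_11 g -> cont_on_11 (fun t => a * f t + b * g t).
Proof.
  intros Hf Hg. apply (cont_on_11_ext (fun t => a * f (clamp t) + b * g (clamp t))).
  - intros t Ht. rewrite clamp_id by exact Ht. reflexivity.
  - apply cont_on_11_of_continuity_pt. intros x _.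
    apply continuity_pt_plus; apply continuity_pt_scal; apply continuity_pt_clamp; assumption.
Qed.

Lemma cont_on_11_even_part f : cont_on_11 f -> cont_on_11 (even_part f).
Proof.
  intros Hf. apply (cont_on_11_ext (fun t => / 2 * f (clamp t) + / 2 * f (clamp (- t)))).
  - intros t Ht. rewrite !clamp_id by (auto using interval_11_opp). unfold even_part. field.
  - apply cont_on_11_of_continuity_pt. intros x _.
    apply continuity_pt_plus; apply continuity_pt_scal; [now apply continuity_pt_clamp|].
    apply (continuity_pt_comp Ropp (fun t => f (clamp t))).
    + apply continuity_pt_opp, continuity_pt_id.
    + now apply continuity_pt_clamp.
Qed.

Lemma ex_RInt_of_continuity f a b : (forall x, continuity_pt f x) -> ex_RInt f a b.
Proof.
  intros Hf. apply (ex_RInt_continuous (V := R_CompleteNormedModule)). intros z _.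
  now apply continuity_pt_filterlim.
Qed.

Lemma ex_RInt_cont_on_11 f a b :
  cont_on_11 f -> interval_11 a -> interval_11 b -> ex_RInt f a b.
Proof.
  intros Hf Ha Hb. apply ex_RInt_ext with (f := fun t => f (clamp t)).
  - intros x Hx. rewrite clamp_id; [reflexivity|].
    unfold Rmin, Rmax in Hx; destruct Rle_dec; solve_interval_11.
  - apply ex_RInt_of_continuity. intros z. now apply continuity_pt_clamp.
Qed.

(* Coquelicot states these for an abstract normed module; here they are restated with
   [Rplus] and [Rmult] so that they can be used for rewriting. *)

Lemma RInt_lin_R a b f g x y : ex_RInt f x y -> ex_RInt g x y ->
  RInt (fun t => a * f t + b * g t) x y = a * RInt f x y + b * RInt g x y.
Proof.
  intros Hf Hg.
  rewrite (RInt_plus (V := R_CompleteNormedModule) (fun t => a * f t) (fun t => b * g t)).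
  - rewrite (RInt_scal (V := R_CompleteNormedModule) f), (RInt_scal (V := R_CompleteNormedModule) g)
      by assumption. reflexivity.
  - now apply (ex_RInt_scal (V := R_NormedModule)).
  - now apply (ex_RInt_scal (V := R_NormedModule)).
Qed.

Lemma RInt_minus_R f g x y : ex_RInt f x y -> ex_RInt g x y ->
  RInt (fun t => f t - g t) x y = RInt f x y - RInt g x y.
Proof. intros. now apply (RInt_minus (V := R_CompleteNormedModule)). Qed.

Lemma RInt_const_R (c x y : R) : RInt (fun _ => c) x y = (y - x) * c.
Proof. apply (RInt_const (V := R_CompleteNormedModule)). Qed.

Lemma RInt_id x y : RInt (fun t => t) x y = (y * y - x * x) / 2.
Proof.
  apply is_RInt_unique.
  replace ((y * y - x * x) / 2) with (minus (y * y / 2) (x * x / 2))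
    by (unfold minus, plus, opp; simpl; field).
  apply (is_RInt_derive (V := R_CompleteNormedModule) (fun t => t * t / 2)).
  - intros z _. auto_derive; [exact I | field].
  - intros z _. apply continuity_pt_filterlim, continuity_pt_id.
Qed.

Lemma RInt_ext_R (f g : R -> R) x y :
  (forall t, Rmin x y < t < Rmax x y -> f t = g t) -> RInt f x y = RInt g x y.
Proof. apply RInt_ext. Qed.

(** * The group G *)

Lemma in_G_le g s t : in_G g -> interval_11 s -> interval_11 t -> s <= t -> g s <= g t.
Proof.
  intros [Hg _] Hs Ht [Hst| ->]; [left; auto | lra].
Qed.

Lemma in_G_range g s : in_G g -> interval_11 s -> interval_11 (g s).
Proof.
  intros Hg Hs. pose proof Hg as (_ & _ & Hm1 & H1). split.
  - rewrite <- Hm1. apply in_G_le; auto; solve_interval_11.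
  - rewrite <- H1. apply in_G_le; auto; solve_interval_11.
Qed.

Lemma in_G_inj g s t : in_G g -> interval_11 s -> interval_11 t -> g s = g t -> s = t.
Proof.
  intros [Hg _] Hs Ht E.
  destruct (Rtotal_order s t) as [H|[H|H]]; auto.
  - specialize (Hg s t Hs Ht H). lra.
  - specialize (Hg t s Ht Hs H). lra.
Qed.

Lemma in_G_onto g y : in_G g -> interval_11 y -> exists s, interval_11 s /\ g s = y.
Proof.
  intros Hg Hy. pose proof Hg as (_ & Hc & Hm1 & H1).
  destruct (Req_dec y (-1)) as [->|Hy1]; [exists (-1); split; [solve_interval_11 | exact Hm1]|].
  destruct (Req_dec y 1) as [->|Hy2]; [exists 1; split; [solve_interval_11 | exact H1]|].
  assert (Hcont : continuity (fun t => g (clamp t) - y)).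
  { intro x. apply continuity_pt_minus; [now apply continuity_pt_clamp | apply continuity_pt_const].
    intros a b; reflexivity. }
  destruct (IVT _ (-1) 1 Hcont) as [z [Hz Hgz]];
    [lra | rewrite clamp_id, Hm1 by solve_interval_11; solve_interval_11 |
     rewrite clamp_id, H1 by solve_interval_11; solve_interval_11 |].
  exists z. rewrite clamp_id in Hgz by exact Hz. split; [exact Hz | lra].
Qed.

Lemma ginv_spec g t : in_G g -> interval_11 t ->
  interval_11 (ginv g t) /\ g (ginv g t) = t.
Proof. intros Hg Ht. unfold ginv. apply epsilon_spec. now apply in_G_onto. Qed.

Lemma ginv_in g t : in_G g -> interval_11 t -> interval_11 (ginv g t).
Proof. intros. now apply ginv_spec. Qed.

Lemma ginv_r g t : in_G g -> interval_11 t -> g (ginv g t) = t.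
Proof. intros. now apply ginv_spec. Qed.

Lemma ginv_l g s : in_G g -> interval_11 s -> ginv g (g s) = s.
Proof.
  intros Hg Hs. apply (in_G_inj g); auto using ginv_in, in_G_range.
  apply ginv_r; auto using in_G_range.
Qed.

Lemma ginv_lt g s t : in_G g -> interval_11 s -> interval_11 t -> s < t -> ginv g s < ginv g t.
Proof.
  intros Hg Hs Ht Hst. destruct (Rlt_le_dec (ginv g s) (ginv g t)) as [H|H]; [exact H|].
  pose proof (in_G_le g _ _ Hg (ginv_in g t Hg Ht) (ginv_in g s Hg Hs) H) as Hle.
  rewrite !ginv_r in Hle by assumption. lra.
Qed.

Lemma ginv_le g s t : in_G g -> interval_11 s -> interval_11 t -> s <= t -> ginv g s <= ginv g t.
Proof. intros Hg Hs Ht [H| ->]; [left; now apply ginv_lt | lra]. Qed.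

Lemma increasing_onto_lower_bound phi x eps :
  (forall s t, interval_11 s -> interval_11 t -> s < t -> phi s < phi t) ->
  (forall t, interval_11 t -> interval_11 (phi t)) ->
  (forall y, interval_11 y -> exists t, interval_11 t /\ phi t = y) ->
  interval_11 x -> 0 < eps ->
  exists d, 0 < d /\ forall z, interval_11 z -> x - d < z -> phi x - eps < phi z.
Proof.
  intros Hlt Hin Honto Hx Heps. destruct (Rle_lt_dec (phi x - eps / 2) (-1)) as [Hlow|Hlow].
  { exists 1. split; [lra|]. intros z Hz _. pose proof (Hin z Hz). solve_interval_11. }
  assert (Hy : interval_11 (phi x - eps / 2)) by (pose proof (Hin x Hx); solve_interval_11).
  destruct (Honto _ Hy) as [a [Ha Hpa]].
  assert (Hax : a < x).
  { destruct (Rlt_le_dec a x) as [H|[H| ->]]; [exact H | | lra].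
    pose proof (Hlt x a Hx Ha H). lra. }
  exists (x - a). split; [lra|]. intros z Hz Hzx.
  pose proof (Hlt a z Ha Hz ltac:(lra)). lra.
Qed.

Lemma cont_on_11_increasing_onto phi :
  (forall s t, interval_11 s -> interval_11 t -> s < t -> phi s < phi t) ->
  (forall t, interval_11 t -> interval_11 (phi t)) ->
  (forall y, interval_11 y -> exists t, interval_11 t /\ phi t = y) ->
  cont_on_11 phi.
Proof.
  intros Hlt Hin Honto x Hx eps Heps.
  destruct (increasing_onto_lower_bound phi x eps Hlt Hin Honto Hx Heps) as [d1 [Hd1 Hlow]].
  (* the upper estimate is the lower one for the reflected map [t |-> - phi (- t)] *)
  destruct (increasing_onto_lower_bound (fun t => - phi (- t)) (- x) eps)
    as [d2 [Hd2 Hup]]; auto using interval_11_opp.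
  { intros s t Hs Ht Hst. apply Ropp_lt_contravar, Hlt; auto using interval_11_opp; lra. }
  { intros y Hy. destruct (Honto (- y) (interval_11_opp y Hy)) as [t [Ht Hpt]].
    exists (- t). rewrite Ropp_involutive, Hpt. split; [now apply interval_11_opp | ring]. }
  exists (Rmin d1 d2). split; [now apply Rmin_glb_lt|]. intros z Hz Hzx.
  apply Rabs_def2 in Hzx. pose proof (Rmin_l d1 d2). pose proof (Rmin_r d1 d2).
  pose proof (Hlow z Hz ltac:(lra)). pose proof (Hup (- z) (interval_11_opp z Hz) ltac:(lra)).
  rewrite !Ropp_involutive in H2. apply Rabs_def1; lra.
Qed.

Lemma cont_on_11_comp_ginv f g : in_G f -> in_G g -> cont_on_11 (fun t => f (ginv g t)).
Proof.
  intros Hf Hg. apply cont_on_11_increasing_onto.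
  - intros s t Hs Ht Hst. apply Hf; auto using ginv_in, ginv_lt.
  - intros t Ht. auto using in_G_range, ginv_in.
  - intros y Hy. destruct (in_G_onto f y Hf Hy) as [s [Hs <-]].
    exists (g s). split; [now apply in_G_range | now rewrite ginv_l].
Qed.

Lemma ex_RInt_comp_ginv f g a b : in_G f -> in_G g -> interval_11 a -> interval_11 b ->
  ex_RInt (fun t => f (ginv g t)) a b.
Proof. intros. apply ex_RInt_cont_on_11; auto using cont_on_11_comp_ginv. Qed.

(** * The form Q *)

Fixpoint sum_lt (N : nat) (a : nat -> R) : R :=
  match N with O => 0 | S m => sum_lt m a + a m end.

Lemma sum_lt_ext N a b : (forall k, (k < N)%nat -> a k = b k) -> sum_lt N a = sum_lt N b.
Proof.
  induction N as [|N IH]; intros H; simpl; [reflexivity|].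
  rewrite IH by (intros; apply H; lia). rewrite H by lia. reflexivity.
Qed.

Lemma sum_lt_plus N a b : sum_lt N (fun k => a k + b k) = sum_lt N a + sum_lt N b.
Proof. induction N as [|N IH]; simpl; [ring | rewrite IH; ring]. Qed.

Lemma sum_lt_by_parts_l N t y d : (forall k, t (S k) = t k + d) ->
  sum_lt N (fun k => (t (S k) - t k) * y k + (y (S k) - y k) * t k)
  = t N * y N - t O * y O - d * (y N - y O).
Proof. intros Ht. induction N as [|N IH]; simpl; [ring | rewrite IH, Ht; ring]. Qed.

Lemma sum_lt_by_parts_r N t y d : (forall k, t (S k) = t k + d) ->
  sum_lt N (fun k => (t (S k) - t k) * y (S k) + (y (S k) - y k) * t (S k))
  = t N * y N - t O * y O + d * (y N - y O).
Proof. intros Ht. induction N as [|N IH]; simpl; [ring | rewrite IH, Ht; ring]. Qed.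

Definition unif_node (N k : nat) : R := -1 + 2 * INR k / INR N.

Lemma unif_node_in N k : (0 < N)%nat -> (k <= N)%nat -> interval_11 (unif_node N k).
Proof.
  intros HN Hk. apply le_INR in Hk. apply lt_0_INR in HN. pose proof (pos_INR k).
  assert (0 <= INR k / INR N <= 1).
  { split; [apply Rdiv_le_0_compat; lra|].
    apply Rmult_le_reg_r with (INR N); [lra|]. unfold Rdiv. rewrite Rmult_assoc, Rinv_l; lra. }
  unfold unif_node, Rdiv in *. solve_interval_11.
Qed.

Lemma unif_node_S N k : (0 < N)%nat -> unif_node N (S k) = unif_node N k + 2 / INR N.
Proof. intros HN. apply lt_0_INR in HN. unfold unif_node. rewrite S_INR. field. lra. Qed.

Lemma unif_node_0 N : unif_node N 0 = -1.
Proof. unfold unif_node. simpl. unfold Rdiv. ring. Qed.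

Lemma unif_node_N N : (0 < N)%nat -> unif_node N N = 1.
Proof. intros HN. apply lt_0_INR in HN. unfold unif_node. field. lra. Qed.

Lemma RInt_increasing_piece h a b :
  interval_11 a -> interval_11 b -> a <= b -> ex_RInt h a b ->
  (forall x y, interval_11 x -> interval_11 y -> x <= y -> h x <= h y) ->
  (b - a) * h a <= RInt h a b <= (b - a) * h b.
Proof.
  intros Ha Hb Hab Hint Hh. rewrite <- !RInt_const_R.
  assert (Hc : forall c, ex_RInt (fun _ => c) a b)
    by (intros; apply (ex_RInt_const (V := R_NormedModule))).
  split; apply RInt_le; auto; intros x Hx; apply Hh; solve_interval_11.
Qed.

Lemma RInt_increasing_bounds h p N :
  (forall k, (k <= N)%nat -> interval_11 (p k)) ->
  (forall k, (k < N)%nat -> p k <= p (S k)) ->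
  (forall a b, interval_11 a -> interval_11 b -> ex_RInt h a b) ->
  (forall x y, interval_11 x -> interval_11 y -> x <= y -> h x <= h y) ->
  sum_lt N (fun k => (p (S k) - p k) * h (p k)) <= RInt h (p O) (p N) <=
  sum_lt N (fun k => (p (S k) - p k) * h (p (S k))).
Proof.
  intros Hp Hmono Hint Hh. induction N as [|N IH]; simpl.
  - replace (RInt h (p O) (p O)) with 0
      by (symmetry; apply (RInt_point (V := R_CompleteNormedModule))).
    lra.
  - rewrite <- (RInt_Chasles (V := R_CompleteNormedModule) h (p O) (p N) (p (S N)))
      by (apply Hint; apply Hp; lia).
    destruct IH as [IHl IHu]; [intros; apply Hp; lia | intros; apply Hmono; lia |].
    destruct (RInt_increasing_piece h (p N) (p (S N))) as [Hl Hu]; auto.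
    change (plus ?u ?v) with (u + v). lra.
Qed.

Lemma Q_linear_l a b f p g : in_G f -> in_G p -> in_G g ->
  Q (fun t => a * f t + b * p t) g = a * Q f g + b * Q p g.
Proof.
  intros Hf Hp Hg. unfold Q.
  apply RInt_lin_R; apply ex_RInt_comp_ginv; auto; solve_interval_11.
Qed.

Lemma Q_sub_l f f' g r : in_G f -> in_G f' -> in_G g ->
  (forall t, interval_11 t -> Rabs (f t - f' t) <= r) ->
  Rabs (Q f g - Q f' g) <= 2 * r.
Proof.
  intros Hf Hf' Hg Hr. unfold Q.
  assert (Hint : forall h, in_G h -> ex_RInt (fun t => h (ginv g t)) (-1) 1)
    by (intros; apply ex_RInt_comp_ginv; auto; solve_interval_11).
  rewrite <- RInt_minus_R by auto.
  replace (2 * r) with ((1 - -1) * r) by ring.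
  apply abs_RInt_le_const; [lra | now apply (ex_RInt_minus (V := R_NormedModule)); apply Hint |].
  intros t Ht. apply Hr, ginv_in; [exact Hg | solve_interval_11].
Qed.

Lemma Rabs_le_div_INR_eq_0 c x :
  (forall N, (0 < N)%nat -> Rabs x <= c / INR N) -> x = 0.
Proof.
  intros H. destruct (Req_dec x 0) as [|Hx]; [assumption|]. exfalso.
  pose proof (Rabs_pos_lt x Hx) as Hpos.
  pose proof (H 1%nat ltac:(lia)) as H1. simpl in H1.
  assert (Hc : 0 < c) by lra.
  destruct (archimed_cor1 (Rabs x / c)) as [N [HN HN0]]; [apply Rdiv_lt_0_compat; lra|].
  specialize (H N HN0). apply lt_INR in HN0. simpl in HN0.
  apply (Rmult_lt_compat_r c) in HN; [|lra].
  replace (Rabs x / c * c) with (Rabs x) in HN by (field; lra).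
  unfold Rdiv in H. lra.
Qed.

Lemma ginv_m1 g : in_G g -> ginv g (-1) = -1.
Proof.
  intros Hg. pose proof Hg as (_ & _ & Hgm1 & _).
  transitivity (ginv g (g (-1))); [now rewrite Hgm1 | apply ginv_l; [exact Hg | solve_interval_11]].
Qed.

Lemma ginv_1 g : in_G g -> ginv g 1 = 1.
Proof.
  intros Hg. pose proof Hg as (_ & _ & _ & Hg1).
  transitivity (ginv g (g 1)); [now rewrite Hg1 | apply ginv_l; [exact Hg | solve_interval_11]].
Qed.

(* Riemann sums of [f o g^-1] on the nodes t_k = -1 + 2k/N and of [g o f^-1] on the nodes
   y_k = f (g^-1 t_k) add up, by summation by parts, to t_N y_N - t_0 y_0 = 0 up to
   sum (t_k+1 - t_k)(y_k+1 - y_k) = 4/N. *)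
Lemma Q_antisym_approx f g N : in_G f -> in_G g -> (0 < N)%nat ->
  Rabs (Q f g + Q g f) <= 4 / INR N.
Proof.
  intros Hf Hg HN.
  set (t := unif_node N). set (y := fun k => f (ginv g (t k))).
  assert (Ht : forall k, (k <= N)%nat -> interval_11 (t k)) by (intros; now apply unif_node_in).
  assert (Hstep : forall k, t (S k) = t k + 2 / INR N) by (intros; now apply unif_node_S).
  assert (Hy : forall k, (k <= N)%nat -> interval_11 (y k))
    by (intros; apply in_G_range, ginv_in; auto).
  assert (Hyt : forall k, (k <= N)%nat -> g (ginv f (y k)) = t k)
    by (intros; unfold y; rewrite ginv_l by auto using ginv_in; apply ginv_r; auto).
  assert (Ht0 : t O = -1) by apply unif_node_0.
  assert (HtN : t N = 1) by now apply unif_node_N.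
  assert (Hy0 : y O = -1) by (unfold y; rewrite Ht0, ginv_m1 by exact Hg; apply Hf).
  assert (HyN : y N = 1) by (unfold y; rewrite HtN, ginv_1 by exact Hg; apply Hf).
  assert (Hcomp_le : forall u v, in_G u -> in_G v ->
            forall a b, interval_11 a -> interval_11 b -> a <= b -> u (ginv v a) <= u (ginv v b))
    by (intros; apply in_G_le; auto using ginv_in, ginv_le).
  assert (Hpos : 0 < 2 / INR N) by (apply Rdiv_lt_0_compat; [lra | now apply lt_0_INR]).
  destruct (RInt_increasing_bounds (fun s => f (ginv g s)) t N) as [Lfg Ufg];
    auto using ex_RInt_comp_ginv.
  { intros k _. rewrite Hstep. lra. }
  destruct (RInt_increasing_bounds (fun s => g (ginv f s)) y N) as [Lgf Ugf];
    auto using ex_RInt_comp_ginv.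
  { intros k Hk. apply Hcomp_le; [exact Hf | exact Hg | apply Ht; lia | apply Ht; lia |].
    rewrite Hstep. lra. }
  rewrite Ht0, HtN in Lfg, Ufg. rewrite Hy0, HyN in Lgf, Ugf. fold (Q f g) (Q g f) in *.
  change (fun k => (t (S k) - t k) * f (ginv g (t k))) with (fun k => (t (S k) - t k) * y k) in Lfg.
  change (fun k => (t (S k) - t k) * f (ginv g (t (S k))))
    with (fun k => (t (S k) - t k) * y (S k)) in Ufg.
  rewrite (sum_lt_ext N _ (fun k => (y (S k) - y k) * t k)) in Lgf
    by (intros; f_equal; apply Hyt; lia).
  rewrite (sum_lt_ext N _ (fun k => (y (S k) - y k) * t (S k))) in Ugf
    by (intros; f_equal; apply Hyt; lia).
  pose proof (sum_lt_by_parts_l N t y _ Hstep) as Hlow.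
  pose proof (sum_lt_by_parts_r N t y _ Hstep) as Hup.
  rewrite sum_lt_plus, Ht0, HtN, Hy0, HyN in Hlow, Hup.
  apply Rabs_le. lra.
Qed.

Lemma Q_antisym f g : in_G f -> in_G g -> Q g f = - Q f g.
Proof.
  intros Hf Hg. enough (Q f g + Q g f = 0) by lra.
  apply (Rabs_le_div_INR_eq_0 4). intros N HN. now apply Q_antisym_approx.
Qed.

Lemma Q_lipschitz f g f' g' r : in_G f -> in_G g -> in_G f' -> in_G g' ->
  (forall t, interval_11 t -> Rabs (f' t - f t) <= r) ->
  (forall t, interval_11 t -> Rabs (g' t - g t) <= r) ->
  Rabs (Q f' g' - Q f g) <= 4 * r.
Proof.
  intros Hf Hg Hf' Hg' Hff Hgg.
  pose proof (Q_sub_l f' f g' r Hf' Hf Hg' Hff) as Hl.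
  pose proof (Q_sub_l g' g f r Hg' Hg Hf Hgg) as Hr.
  rewrite (Q_antisym f g' Hf Hg'), (Q_antisym f g Hf Hg) in Hr.
  replace (Q f' g' - Q f g) with ((Q f' g' - Q f g') - (- Q f g' - - Q f g)) by ring.
  eapply Rle_trans; [apply Rabs_sub_le | lra].
Qed.

(** * Linear independence *)

Definition replace_at {A : Type} (x : nat -> A) (j : nat) (a : A) : nat -> A :=
  fun i => if Nat.eqb i j then a else x i.

Lemma replace_at_eq {A : Type} (x : nat -> A) j a : replace_at x j a j = a.
Proof. unfold replace_at. now rewrite Nat.eqb_refl. Qed.

Lemma replace_at_neq {A : Type} (x : nat -> A) i j a : i <> j -> replace_at x j a i = x i.
Proof. intros H. unfold replace_at. now rewrite (proj2 (Nat.eqb_neq i j) H). Qed.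

Lemma lin_comb_ext m c c' F F' t :
  (forall j, (j < m)%nat -> c j = c' j) -> (forall j, (j < m)%nat -> F j t = F' j t) ->
  lin_comb m c F t = lin_comb m c' F' t.
Proof.
  induction m as [|m IH]; intros Hc HF; simpl; [reflexivity|].
  rewrite IH, Hc, HF by (intros; auto with arith). reflexivity.
Qed.

Lemma lin_comb_replace_last_coef m c a F t :
  lin_comb (S m) (replace_at c m a) F t = lin_comb m c F t + a * F m t.
Proof.
  simpl. rewrite replace_at_eq. f_equal. apply lin_comb_ext; [|reflexivity].
  intros j Hj. apply replace_at_neq. lia.
Qed.

Lemma lin_comb_replace_last m c F f t :
  lin_comb (S m) c (replace_at F m f) t = lin_comb m c F t + c m * f t.
Proof.
  simpl. rewrite replace_at_eq. f_equal. apply lin_comb_ext; [reflexivity|].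
  intros j Hj. now rewrite replace_at_neq by lia.
Qed.

Lemma lin_comb_replace_at m c G j g t : (j < m)%nat ->
  lin_comb m c (replace_at G j g) t = lin_comb m c G t + c j * (g t - G j t).
Proof.
  induction m as [|m IH]; intros Hj; [lia|]. simpl.
  destruct (Nat.eq_dec j m) as [->|Hne].
  - rewrite replace_at_eq, (lin_comb_ext m c c _ G); [ring | reflexivity |].
    intros k Hk. now rewrite replace_at_neq by lia.
  - rewrite IH, replace_at_neq by lia. ring.
Qed.

Lemma lin_comb_zero_coef m c F t : (forall j, (j < m)%nat -> c j = 0) -> lin_comb m c F t = 0.
Proof.
  induction m as [|m IH]; intros Hc; simpl; [reflexivity|].
  rewrite IH by (intros; apply Hc; lia). rewrite Hc by lia. ring.
Qed.

Lemma lin_comb_lin_coef m a b c d F t :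
  lin_comb m (fun j => a * c j + b * d j) F t = a * lin_comb m c F t + b * lin_comb m d F t.
Proof. induction m as [|m IH]; simpl; [ring | rewrite IH; ring]. Qed.

Lemma lin_comb_scal_coef m a c F t :
  lin_comb m (fun j => a * c j) F t = a * lin_comb m c F t.
Proof. induction m as [|m IH]; simpl; [ring | rewrite IH; ring]. Qed.

Lemma lin_comb_eval m c F x t : lin_comb m c (fun j _ => F j x) t = lin_comb m c F x.
Proof. induction m as [|m IH]; simpl; [reflexivity | now rewrite IH]. Qed.

Lemma lin_comb_sub m c F F' t :
  lin_comb m c (fun j s => F j s - F' j s) t = lin_comb m c F t - lin_comb m c F' t.
Proof. induction m as [|m IH]; simpl; [ring | rewrite IH; ring]. Qed.

Lemma lin_comb_sub_scaled m c F t0 u t :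
  lin_comb m c (fun j s => F j s - F j t0 * u s) t = lin_comb m c F t - lin_comb m c F t0 * u t.
Proof. induction m as [|m IH]; simpl; [ring | rewrite IH; ring]. Qed.

Definition sumabs (m : nat) (c : nat -> R) : R := sum_lt m (fun j => Rabs (c j)).

Lemma sumabs_nonneg m c : 0 <= sumabs m c.
Proof.
  induction m as [|m IH]; unfold sumabs in *; simpl; [lra|]. pose proof (Rabs_pos (c m)). lra.
Qed.

Lemma Rabs_le_sumabs m c i : (i < m)%nat -> Rabs (c i) <= sumabs m c.
Proof.
  induction m as [|m IH]; intros Hi; [lia|]. unfold sumabs in *; simpl.
  destruct (Nat.eq_dec i m) as [->|Hne].
  - pose proof (sumabs_nonneg m c). unfold sumabs in *. lra.
  - pose proof (IH ltac:(lia)). pose proof (Rabs_pos (c m)). lra.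
Qed.

Lemma lin_comb_bound m c F t M : (forall j, (j < m)%nat -> Rabs (F j t) <= M) ->
  Rabs (lin_comb m c F t) <= sumabs m c * M.
Proof.
  induction m as [|m IH]; intros HF; simpl; unfold sumabs in *; simpl; [rewrite Rabs_R0; lra|].
  eapply Rle_trans; [apply Rabs_triang|]. rewrite Rabs_mult.
  pose proof (IH ltac:(intros; apply HF; lia)).
  pose proof (Rmult_le_compat_l _ _ _ (Rabs_pos (c m)) (HF m ltac:(lia))). lra.
Qed.

Lemma lin_indep_ext m F F' : lin_indep m F ->
  (forall i t, (i < m)%nat -> interval_11 t -> F i t = F' i t) -> lin_indep m F'.
Proof.
  intros Hind HFF c Hc. apply Hind. intros t Ht. rewrite <- (Hc t Ht).
  apply lin_comb_ext; [reflexivity|]. intros; now apply HFF.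
Qed.

Definition lin_indep_bound (m : nat) (g : nat -> R -> R) (K : R) : Prop :=
  forall c B, (forall t, interval_11 t -> Rabs (lin_comb m c g t) <= B) -> sumabs m c <= K * B.

Lemma lin_indep_of_bound m g K : lin_indep_bound m g K -> lin_indep m g.
Proof.
  intros HK c Hc i Hi.
  assert (H0 : sumabs m c <= K * 0).
  { apply HK. intros t Ht. rewrite Hc, Rabs_R0 by exact Ht. lra. }
  pose proof (Rabs_le_sumabs m c i Hi). rewrite Rmult_0_r in H0.
  destruct (Req_dec (c i) 0) as [|Hci]; [assumption|].
  pose proof (Rabs_pos_lt _ Hci). lra.
Qed.

Lemma lin_indep_bound_perturb m g h K delta :
  lin_indep_bound m g K -> 0 <= delta -> K * delta <= 1 / 2 ->
  (forall j t, (j < m)%nat -> interval_11 t -> Rabs (h j t - g j t) <= delta) ->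
  lin_indep_bound m h (2 * K).
Proof.
  intros HK Hd HKd Hhg c B Hc.
  assert (Hg : sumabs m c <= K * (B + sumabs m c * delta)).
  { apply HK. intros t Ht.
    replace (lin_comb m c g t) with (lin_comb m c h t - lin_comb m c (fun j s => h j s - g j s) t)
      by (rewrite lin_comb_sub; ring).
    eapply Rle_trans; [apply Rabs_sub_le|].
    pose proof (Hc t Ht).
    pose proof (lin_comb_bound m c (fun j s => h j s - g j s) t delta (fun j Hj => Hhg j t Hj Ht)).
    lra. }
  pose proof (Rmult_le_compat_r _ _ _ (sumabs_nonneg m c) HKd). nra.
Qed.

Lemma lin_indep_last_nonzero m g : lin_indep (S m) g ->
  exists t0, interval_11 t0 /\ g m t0 <> 0.
Proof.
  intros Hind. apply NNPP. intros Hno.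
  assert (Hz : forall t, interval_11 t -> lin_comb (S m) (replace_at (fun _ => 0) m 1) g t = 0).
  { intros t Ht. rewrite lin_comb_replace_last_coef, lin_comb_zero_coef by reflexivity.
    destruct (Req_dec (g m t) 0) as [->|Hne]; [ring|]. exfalso. eauto. }
  pose proof (Hind _ Hz m ltac:(lia)) as Hm. rewrite replace_at_eq in Hm. lra.
Qed.

Section EliminateLast.

Variables (m : nat) (g : nat -> R -> R) (M t0 : R).
Hypothesis HM : forall j t, (j < S m)%nat -> interval_11 t -> Rabs (g j t) <= M.
Hypothesis Ht0 : interval_11 t0.
Hypothesis Hg0 : g m t0 <> 0.

Definition eliminate_last : nat -> R -> R := fun j s => g j s - g j t0 * (g m s / g m t0).

Lemma lin_comb_eliminate_last c t : lin_comb (S m) c g t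
  = lin_comb m c eliminate_last t + lin_comb (S m) c g t0 * (g m t / g m t0).
Proof. unfold eliminate_last. rewrite lin_comb_sub_scaled. simpl. field. exact Hg0. Qed.

Lemma lin_indep_eliminate_last : lin_indep (S m) g -> lin_indep m eliminate_last.
Proof.
  intros Hind c Hc i Hi.
  set (c' := replace_at c m (- (lin_comb m c g t0 / g m t0))).
  assert (Hc' : forall t, interval_11 t -> lin_comb (S m) c' g t = 0).
  { intros t Ht. rewrite <- (Hc t Ht). unfold c', eliminate_last.
    rewrite lin_comb_sub_scaled, lin_comb_replace_last_coef. field. exact Hg0. }
  pose proof (Hind c' Hc' i ltac:(lia)) as Hci. unfold c' in Hci.
  now rewrite replace_at_neq in Hci by lia.
Qed.

Let M0 := M / Rabs (g m t0).

Lemma Rabs_ratio_last_le s : interval_11 s -> Rabs (g m s / g m t0) <= M0.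
Proof.
  intros Hs. unfold M0, Rdiv. rewrite Rabs_mult, Rabs_inv.
  apply Rmult_le_compat_r; [left; now apply Rinv_0_lt_compat, Rabs_pos_lt | auto].
Qed.

Lemma Rabs_eliminate_last_le j s : (j < m)%nat -> interval_11 s ->
  Rabs (eliminate_last j s) <= M + M * M0.
Proof.
  intros Hj Hs. unfold eliminate_last. eapply Rle_trans; [apply Rabs_sub_le|]. rewrite Rabs_mult.
  pose proof (HM j s ltac:(lia) Hs).
  pose proof (Rmult_le_compat _ _ _ _ (Rabs_pos _) (Rabs_pos _)
                (HM j t0 ltac:(lia) Ht0) (Rabs_ratio_last_le s Hs)). lra.
Qed.

(* A relation among the g_j is bounded through its value at t0 (which controls the
   coefficient of g_m) and through the bound Kh for the eliminated family. *)
Lemma lin_indep_bound_of_eliminate_last Kh : lin_indep_bound m eliminate_last Kh ->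
  lin_indep_bound (S m) g (Kh * (1 + M0) + (1 + Kh * (1 + M0) * M) / Rabs (g m t0)).
Proof.
  intros HKh c B Hc.
  assert (Hpos : 0 < Rabs (g m t0)) by now apply Rabs_pos_lt.
  assert (HM0 : 0 <= M) by (eapply Rle_trans; [apply Rabs_pos | apply (HM m t0); auto]).
  set (A := 1 + M0). pose proof (Hc t0 Ht0) as HB0.
  assert (Hh : sumabs m c <= Kh * (B * A)).
  { apply HKh. intros t Ht.
    replace (lin_comb m c eliminate_last t)
      with (lin_comb (S m) c g t - lin_comb (S m) c g t0 * (g m t / g m t0))
      by (rewrite lin_comb_eliminate_last; ring).
    eapply Rle_trans; [apply Rabs_sub_le|]. rewrite Rabs_mult.
    pose proof (Hc t Ht).
    pose proof (Rmult_le_compat _ _ _ _ (Rabs_pos _) (Rabs_pos _) HB0 (Rabs_ratio_last_le t Ht)).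
    unfold A. lra. }
  assert (Hcm : Rabs (c m) * Rabs (g m t0) <= B + Kh * (B * A) * M).
  { rewrite <- Rabs_mult.
    replace (c m * g m t0) with (lin_comb (S m) c g t0 - lin_comb m c g t0) by (simpl; ring).
    eapply Rle_trans; [apply Rabs_sub_le|].
    pose proof (lin_comb_bound m c g t0 M (fun j Hj => HM j t0 ltac:(lia) Ht0)).
    pose proof (Rmult_le_compat_r _ _ _ HM0 Hh). lra. }
  change (sumabs (S m) c) with (sumabs m c + Rabs (c m)).
  replace ((Kh * A + (1 + Kh * A * M) / Rabs (g m t0)) * B)
    with (Kh * (B * A) + (B + Kh * (B * A) * M) / Rabs (g m t0)) by (field; lra).
  enough (Rabs (c m) <= (B + Kh * (B * A) * M) / Rabs (g m t0)) by lra.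
  apply Rmult_le_reg_r with (Rabs (g m t0)); [exact Hpos|].
  unfold Rdiv. rewrite Rmult_assoc, Rinv_l, Rmult_1_r by lra. exact Hcm.
Qed.

End EliminateLast.

Lemma lin_indep_bound_exists m : forall g M,
  (forall j t, (j < m)%nat -> interval_11 t -> Rabs (g j t) <= M) ->
  lin_indep m g -> exists K, lin_indep_bound m g K.
Proof.
  induction m as [|m IH]; intros g M HM Hind.
  { exists 0. intros c B _. unfold sumabs; simpl. lra. }
  destruct (lin_indep_last_nonzero m g Hind) as [t0 [Ht0 Hg0]].
  destruct (IH (eliminate_last m g t0) (M + M * (M / Rabs (g m t0)))) as [Kh HKh];
    [exact (Rabs_eliminate_last_le m g M t0 HM Ht0 Hg0) | now apply lin_indep_eliminate_last |].
  exists (Kh * (1 + M / Rabs (g m t0)) + (1 + Kh * (1 + M / Rabs (g m t0)) * M) / Rabs (g m t0)).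
  exact (lin_indep_bound_of_eliminate_last m g M t0 HM Ht0 Hg0 Kh HKh).
Qed.

Lemma lin_indep_open m g M :
  (forall j t, (j < m)%nat -> interval_11 t -> Rabs (g j t) <= M) ->
  lin_indep m g -> exists delta, 0 < delta /\ forall h,
    (forall j t, (j < m)%nat -> interval_11 t -> Rabs (h j t - g j t) <= delta) -> lin_indep m h.
Proof.
  intros HM Hind. destruct (lin_indep_bound_exists m g M HM Hind) as [K HK].
  assert (Hd : 0 < / (2 * (Rabs K + 1))) by (apply Rinv_0_lt_compat; pose proof (Rabs_pos K); lra).
  exists (/ (2 * (Rabs K + 1))). split; [exact Hd|]. intros h Hh.
  apply (lin_indep_of_bound m h (2 * K)), (lin_indep_bound_perturb m g h K (/ (2 * (Rabs K + 1))));
    auto; [lra|].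
  apply Rle_trans with (Rabs K * / (2 * (Rabs K + 1))).
  - apply Rmult_le_compat_r; [lra | apply Rle_abs].
  - apply Rmult_le_reg_r with (2 * (Rabs K + 1)); [pose proof (Rabs_pos K); lra|].
    rewrite Rmult_assoc, Rinv_l by (pose proof (Rabs_pos K); lra). lra.
Qed.

(** * GEN and GEN+ are open *)

Lemma ex_pos_forall_lt n (P : nat -> R -> Prop) :
  (forall i e e', (i < n)%nat -> 0 < e' <= e -> P i e -> P i e') ->
  (forall i, (i < n)%nat -> exists e, 0 < e /\ P i e) ->
  exists e, 0 < e /\ forall i, (i < n)%nat -> P i e.
Proof.
  induction n as [|n IH]; intros Hmono Hex.
  { exists 1. split; [lra | intros; lia]. }
  destruct IH as [e1 [He1 HP1]]; [intros; eapply Hmono; eauto | intros; apply Hex; lia |].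
  destruct (Hex n ltac:(lia)) as [e2 [He2 HP2]].
  pose proof (Rmin_l e1 e2). pose proof (Rmin_r e1 e2).
  exists (Rmin e1 e2). split; [now apply Rmin_glb_lt|]. intros i Hi.
  destruct (Nat.eq_dec i n) as [->|Hne].
  - apply (Hmono n e2); [lia | split; [now apply Rmin_glb_lt | lra] | exact HP2].
  - apply (Hmono i e1); [lia | split; [now apply Rmin_glb_lt | lra] | apply HP1; lia].
Qed.

Lemma ball_n_le n eps F H : ball_n n eps F H ->
  forall i t, (i < n)%nat -> interval_11 t -> Rabs (H i t - F i t) <= eps.
Proof.
  intros Hb i t Hi Ht. destruct (Hb i Hi) as [r [Hr Hrt]].
  rewrite Rabs_minus_sym. specialize (Hrt t Ht). lra.
Qed.

Lemma Rabs_even_part_le f t : in_G f -> interval_11 t -> Rabs (even_part f t) <= 1.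
Proof.
  intros Hf Ht. pose proof (in_G_range f t Hf Ht).
  pose proof (in_G_range f (- t) Hf (interval_11_opp t Ht)).
  unfold even_part, interval_11 in *. apply Rabs_le. lra.
Qed.

Lemma Rabs_even_part_sub f f' r : (forall t, interval_11 t -> Rabs (f t - f' t) <= r) ->
  forall t, interval_11 t -> Rabs (even_part f t - even_part f' t) <= r.
Proof.
  intros Hr t Ht. pose proof (Hr t Ht). pose proof (Hr (- t) (interval_11_opp t Ht)).
  unfold even_part.
  replace ((f t + f (- t)) / 2 - (f' t + f' (- t)) / 2)
    with ((f t - f' t) / 2 + (f (- t) - f' (- t)) / 2) by field.
  eapply Rle_trans; [apply Rabs_triang|]. unfold Rdiv. rewrite !Rabs_mult.
  rewrite Rabs_inv, (Rabs_pos_eq 2) by lra. lra.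
Qed.

Lemma Q_nonzero_open n F : in_G0n n F -> Q_nonzero n F -> exists eps, 0 < eps /\
  forall H, in_G0n n H ->
  (forall i t, (i < n)%nat -> interval_11 t -> Rabs (H i t - F i t) <= eps) -> Q_nonzero n H.
Proof.
  intros HF HQ.
  destruct (ex_pos_forall_lt n
              (fun i e => forall j, (j < n)%nat -> i <> j -> e <= Rabs (Q (F i) (F j)) / 8))
    as [e [He Hle]].
  { intros i e e' _ He' HP j Hj Hij. specialize (HP j Hj Hij). lra. }
  { intros i Hi. apply (ex_pos_forall_lt n (fun j e => i <> j -> e <= Rabs (Q (F i) (F j)) / 8)).
    - intros j e e' _ He' HP Hij. specialize (HP Hij). lra.
    - intros j Hj. destruct (Nat.eq_dec i j) as [Heq|Hij].
      + exists 1. split; [lra | contradiction].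
      + exists (Rabs (Q (F i) (F j)) / 8). split; [|lra].
        pose proof (Rabs_pos_lt _ (HQ i j Hi Hj Hij)). lra. }
  exists e. split; [exact He|]. intros H HH Hclose i j Hi Hj Hij HQH.
  pose proof (Q_lipschitz (F i) (F j) (H i) (H j) e (proj1 (HF i Hi)) (proj1 (HF j Hj))
                (proj1 (HH i Hi)) (proj1 (HH j Hj)) (fun t Ht => Hclose i t Hi Ht)
                (fun t Ht => Hclose j t Hj Ht)) as Hlip.
  pose proof (Hle i Hi j Hj Hij).
  rewrite HQH, Rminus_0_l, Rabs_Ropp in Hlip.
  pose proof (Rabs_pos_lt _ (HQ i j Hi Hj Hij)). lra.
Qed.

Lemma Gdelta_of_open n S : open_in_G0n n S -> Gdelta_in_G0n n S.
Proof.
  intros Ho. exists (fun _ => S). split; [now intros|].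
  intros F. split; [intros HS; split; [apply (Ho F HS) | auto] | intros [_ HS]; apply (HS O)].
Qed.

Lemma GENplus_open n : open_in_G0n n (GENplus n).
Proof.
  intros F (HF & Hind & HQ). split; [exact HF|].
  destruct (lin_indep_open n (fun i => even_part (F i)) 1) as [d1 [Hd1 Hind']]; [|exact Hind|].
  { intros j t Hj Ht. apply Rabs_even_part_le; [apply HF|]; assumption. }
  destruct (Q_nonzero_open n F HF HQ) as [d2 [Hd2 HQ']].
  pose proof (Rmin_l d1 d2) as Hd1m. pose proof (Rmin_r d1 d2) as Hd2m.
  exists (Rmin d1 d2). split; [now apply Rmin_glb_lt|].
  intros H HH Hb. pose proof (ball_n_le n _ F H Hb) as Hclose.
  split; [exact HH | split].
  - apply Hind'. intros j t Hj Ht. apply (Rabs_even_part_sub (H j) (F j)); [|exact Ht].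
    intros u Hu. specialize (Hclose j u Hj Hu). lra.
  - apply HQ'; [exact HH|]. intros i t Hi Ht. specialize (Hclose i t Hi Ht). lra.
Qed.

Lemma lin_indep_with_id_iff n F :
  lin_indep_with_id n F <-> lin_indep (S n) (replace_at F n (fun t => t)).
Proof.
  split.
  - intros Hind c Hc.
    destruct (Hind (c n) c) as [Hn Hlt].
    { intros t Ht. rewrite <- (Hc t Ht), lin_comb_replace_last. ring. }
    intros i Hi. destruct (Nat.eq_dec i n) as [->|Hne]; [exact Hn | apply Hlt; lia].
  - intros Hind c0 c Hc.
    assert (Hc' : forall t, interval_11 t ->
               lin_comb (S n) (replace_at c n c0) (replace_at F n (fun t => t)) t = 0).
    { intros t Ht. rewrite lin_comb_replace_last, replace_at_eq, <- (Hc t Ht).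
      rewrite (lin_comb_ext n _ c _ F); [ring | | now intros].
      intros j Hj. apply replace_at_neq. lia. }
    split.
    + pose proof (Hind _ Hc' n ltac:(lia)) as Hn. now rewrite replace_at_eq in Hn.
    + intros i Hi. pose proof (Hind _ Hc' i ltac:(lia)) as Hci.
      now rewrite replace_at_neq in Hci by lia.
Qed.

Lemma GEN_open n : open_in_G0n n (GEN n).
Proof.
  intros F (HF & Hind & HQ). split; [exact HF|].
  apply lin_indep_with_id_iff in Hind.
  destruct (lin_indep_open (S n) (replace_at F n (fun t => t)) 1) as [d1 [Hd1 Hind']];
    [|exact Hind|].
  { intros j t Hj Ht. unfold replace_at. destruct (Nat.eqb_spec j n).
    - apply Rabs_le. solve_interval_11.
    - pose proof (in_G_range (F j) t (proj1 (HF j ltac:(lia))) Ht).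
      apply Rabs_le. solve_interval_11. }
  destruct (Q_nonzero_open n F HF HQ) as [d2 [Hd2 HQ']].
  pose proof (Rmin_l d1 d2) as Hd1m. pose proof (Rmin_r d1 d2) as Hd2m.
  exists (Rmin d1 d2). split; [now apply Rmin_glb_lt|].
  intros H HH Hb. pose proof (ball_n_le n _ F H Hb) as Hclose.
  split; [exact HH | split].
  - apply lin_indep_with_id_iff, Hind'. intros j t Hj Ht. unfold replace_at.
    destruct (Nat.eqb_spec j n).
    + rewrite Rminus_diag, Rabs_R0. lra.
    + specialize (Hclose j t ltac:(lia) Ht). lra.
  - apply HQ'; [exact HH|]. intros i t Hi Ht. specialize (Hclose i t Hi Ht). lra.
Qed.

(* A relation c0 t + sum c_i F_i t = 0 holds at t and -t; averaging kills the odd term c0 t. *)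
Lemma GENplus_GEN n F : GENplus n F -> GEN n F.
Proof.
  intros (HF & Hind & HQ). split; [exact HF | split; [|exact HQ]].
  intros c0 c Hc.
  assert (Hz : forall i, (i < n)%nat -> c i = 0).
  { apply Hind. intros t Ht.
    assert (E : lin_comb n c (fun i => even_part (F i)) t
                = (lin_comb n c F t + lin_comb n c F (- t)) / 2).
    { clear. induction n as [|n IH]; simpl; [field | rewrite IH; unfold even_part; field]. }
    rewrite E. pose proof (Hc t Ht). pose proof (Hc (- t) (interval_11_opp t Ht)). lra. }
  split; [|exact Hz].
  pose proof (Hc 1 ltac:(solve_interval_11)) as H1. rewrite lin_comb_zero_coef in H1 by exact Hz.
  lra.
Qed.

(** * GEN+ is dense *)

Lemma in_G0_convex l f p : in_G0 f -> in_G0 p -> 0 <= l <= 1 ->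
  in_G0 (fun t => (1 - l) * f t + l * p t).
Proof.
  intros [(Hfl & Hfc & Hf1 & Hf2) Hfi] [(Hpl & Hpc & Hp1 & Hp2) Hpi] Hl.
  split; [split; [|split; [|split]]|].
  - intros s t Hs Ht Hst. pose proof (Hfl s t Hs Ht Hst). pose proof (Hpl s t Hs Ht Hst).
    set (a := f t - f s) in *. set (b := p t - p s) in *.
    assert (Hm : 0 < Rmin a b) by (apply Rmin_glb_lt; unfold a, b; lra).
    pose proof (Rmult_le_pos (1 - l) (a - Rmin a b) ltac:(lra) ltac:(pose proof (Rmin_l a b); lra)).
    pose proof (Rmult_le_pos l (b - Rmin a b) ltac:(lra) ltac:(pose proof (Rmin_r a b); lra)).
    unfold a, b in *. nra.
  - now apply cont_on_11_lin.
  - rewrite Hf1, Hp1. ring.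
  - rewrite Hf2, Hp2. ring.
  - change (RInt (fun t => (1 - l) * f t + l * p t) (-1) 1 = 0 :> R).
    rewrite RInt_lin_R, Hfi, Hpi by (apply ex_RInt_cont_on_11; auto; solve_interval_11). ring.
Qed.

Lemma avoid_finitely_many m (bad : nat -> R -> Prop) :
  (forall i x y, (i < m)%nat -> bad i x -> bad i y -> x = y) ->
  forall eps, 0 < eps -> exists l, 0 < l < eps /\ forall i, (i < m)%nat -> ~ bad i l.
Proof.
  induction m as [|m IH]; intros Huniq eps Heps.
  { exists (eps / 2). split; [lra | intros; lia]. }
  assert (IH' := IH (fun i x y Hi => Huniq i x y ltac:(lia))).
  destruct (IH' eps Heps) as [l1 [Hl1 Hgood1]].
  destruct (classic (bad m l1)) as [Hbad|Hok].
  - destruct (IH' l1 (proj1 Hl1)) as [l2 [Hl2 Hgood2]].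
    exists l2. split; [lra|]. intros i Hi. destruct (Nat.eq_dec i m) as [->|Hne].
    + intros Hbad2. pose proof (Huniq m l1 l2 ltac:(lia) Hbad Hbad2). lra.
    + apply Hgood2. lia.
  - exists l1. split; [exact Hl1|]. intros i Hi.
    destruct (Nat.eq_dec i m) as [->|Hne]; [exact Hok | apply Hgood1; lia].
Qed.

Lemma affine_root_unique a b x y : a <> 0 \/ b <> 0 ->
  (1 - x) * a + x * b = 0 -> (1 - y) * a + y * b = 0 -> x = y.
Proof.
  intros Hab Hx Hy.
  assert (E : (x - y) * (b - a) = 0) by lra.
  apply Rmult_integral in E. destruct E as [E|E]; [lra|].
  assert (b = a) by lra. subst b. assert (a = 0) by lra. destruct Hab; lra.
Qed.

Lemma not_lin_indep m F : ~ lin_indep m F ->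
  exists c, (forall t, interval_11 t -> lin_comb m c F t = 0) /\ exists i, (i < m)%nat /\ c i <> 0.
Proof.
  intros Hn. apply NNPP. intros Hno. apply Hn. intros c Hc i Hi. apply NNPP. intros Hci.
  apply Hno. exists c. split; [exact Hc | exists i; auto].
Qed.

(* Two relations with nonzero j-th coefficient can be combined to eliminate F_j;
   independence of F then forces the two shifts to agree. *)
Lemma lin_indep_replace_dependent_unique m F j D mu1 mu2 : (j < m)%nat -> lin_indep m F ->
  ~ lin_indep m (replace_at F j (fun t => F j t + mu1 * D t)) ->
  ~ lin_indep m (replace_at F j (fun t => F j t + mu2 * D t)) -> mu1 = mu2.
Proof.
  intros Hj HF H1 H2.
  destruct (not_lin_indep _ _ H1) as [c [Hc [i [Hi Hci]]]].
  destruct (not_lin_indep _ _ H2) as [d [Hd [k [Hk Hdk]]]].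
  assert (Ec : forall t, interval_11 t -> lin_comb m c F t = - (c j * mu1) * D t).
  { intros t Ht. pose proof (Hc t Ht) as E. rewrite lin_comb_replace_at in E by exact Hj. lra. }
  assert (Ed : forall t, interval_11 t -> lin_comb m d F t = - (d j * mu2) * D t).
  { intros t Ht. pose proof (Hd t Ht) as E. rewrite lin_comb_replace_at in E by exact Hj. lra. }
  assert (Hcj : c j <> 0).
  { intros E. apply Hci, (HF c); [|exact Hi]. intros t Ht. rewrite Ec, E by exact Ht. ring. }
  assert (Hdj : d j <> 0).
  { intros E. apply Hdk, (HF d); [|exact Hk]. intros t Ht. rewrite Ed, E by exact Ht. ring. }
  assert (He : forall t, interval_11 t ->
            lin_comb m (fun k => (d j * mu2) * c k + (- (c j * mu1)) * d k) F t = 0).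
  { intros t Ht. rewrite lin_comb_lin_coef, Ec, Ed by exact Ht. ring. }
  pose proof (HF _ He j Hj) as E.
  assert (E' : c j * d j * (mu2 - mu1) = 0) by lra.
  destruct (Rmult_integral _ _ E') as [E0|E0]; [|lra].
  destruct (Rmult_integral _ _ E0); contradiction.
Qed.

Lemma Q_nonzero_replace_at m H j f : (j < m)%nat -> in_G0n m H -> in_G f ->
  (forall a b, (a < m)%nat -> (b < m)%nat -> a <> b -> a <> j -> b <> j -> Q (H a) (H b) <> 0) ->
  (forall i, (i < m)%nat -> i <> j -> Q f (H i) <> 0) ->
  Q_nonzero m (replace_at H j f).
Proof.
  intros Hj HH Hf HQ HQf a b Ha Hb Hab.
  destruct (Nat.eq_dec a j) as [->|Haj]; destruct (Nat.eq_dec b j) as [->|Hbj].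
  - contradiction.
  - rewrite replace_at_eq, replace_at_neq by exact Hbj. now apply HQf.
  - rewrite replace_at_eq, replace_at_neq by exact Haj.
    rewrite (Q_antisym f (H a) Hf (proj1 (HH a Ha))). intros E. apply (HQf a Ha Haj). lra.
  - rewrite !replace_at_neq by assumption. now apply HQ.
Qed.

Lemma even_parts_segment_dependent_unique m H j Y x y : (j < m)%nat ->
  lin_indep m (fun i => even_part (H i)) ->
  ~ lin_indep m (fun k => even_part (replace_at H j (fun t => (1 - x) * Y t + x * H j t) k)) ->
  ~ lin_indep m (fun k => even_part (replace_at H j (fun t => (1 - y) * Y t + y * H j t) k)) ->
  x = y.
Proof.
  intros Hj Hind Hx Hy.
  set (G := fun i => even_part (H i)). set (D := fun t => even_part Y t - G j t).
  assert (Hshift : forall l,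
    ~ lin_indep m (fun k => even_part (replace_at H j (fun t => (1 - l) * Y t + l * H j t) k)) ->
    ~ lin_indep m (replace_at G j (fun s => G j s + (1 - l) * D s))).
  { intros l Hn HG. apply Hn, (lin_indep_ext m _ _ HG). intros i t _ _.
    unfold replace_at. destruct (Nat.eqb i j); [|reflexivity]. unfold D, G, even_part. field. }
  pose proof (lin_indep_replace_dependent_unique m G j D (1 - x) (1 - y) Hj Hind
                (Hshift x Hx) (Hshift y Hy)). lra.
Qed.

(* Along the segment from Y to H_j each defining condition of GEN+ fails for at most
   one l: Q is affine in its first argument, and independence is lost at most once. *)
Lemma GENplus_replace_segment m H j Y eps :
  (j < m)%nat -> in_G0n m H -> in_G0 Y ->
  lin_indep m (fun i => even_part (H i)) ->
  (forall a b, (a < m)%nat -> (b < m)%nat -> a <> b -> a <> j -> b <> j -> Q (H a) (H b) <> 0) ->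
  (forall i, (i < m)%nat -> i <> j -> Q Y (H i) <> 0 \/ Q (H j) (H i) <> 0) ->
  0 < eps <= 1 ->
  exists l, 0 < l < eps /\ GENplus m (replace_at H j (fun t => (1 - l) * Y t + l * H j t)).
Proof.
  intros Hj HH HY Hind HQ HQY Heps.
  set (seg := fun l t => (1 - l) * Y t + l * H j t).
  set (bad := fun i l => if Nat.eqb i m
                         then ~ lin_indep m (fun k => even_part (replace_at H j (seg l) k))
                         else i <> j /\ Q (seg l) (H i) = 0).
  destruct (avoid_finitely_many (S m) bad) with (eps := eps) as [l [Hl Hgood]]; [| lra |].
  { intros i x y Hi Bx By. unfold bad in Bx, By. destruct (Nat.eqb_spec i m).
    - now apply (even_parts_segment_dependent_unique m H j Y).
    - destruct Bx as [Hij Bx], By as [_ By].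
      unfold seg in Bx, By. rewrite Q_linear_l in Bx, By by (apply HY || apply HH; lia).
      apply (affine_root_unique (Q Y (H i)) (Q (H j) (H i))); auto. apply HQY; lia. }
  exists l. split; [exact Hl|].
  assert (Hseg : in_G0 (seg l)) by (apply in_G0_convex; [exact HY | apply HH, Hj | lra]).
  split; [|split].
  - intros i Hi. unfold replace_at. destruct (Nat.eqb i j); [exact Hseg | now apply HH].
  - pose proof (Hgood m ltac:(lia)) as Hm. unfold bad in Hm. rewrite Nat.eqb_refl in Hm.
    now apply NNPP.
  - apply Q_nonzero_replace_at; auto; [apply Hseg|]. intros i Hi Hij E.
    apply (Hgood i ltac:(lia)). unfold bad. destruct (Nat.eqb_spec i m); [lia | auto].
Qed.

Lemma GENplus_dense_of n P : GENplus n P ->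
  forall F eps, in_G0n n F -> 0 < eps -> exists H, GENplus n H /\ ball_n n eps F H.
Proof.
  intros HP F eps HF Heps.
  assert (Hk : forall k, (k <= n)%nat -> exists H, GENplus n H /\
            forall i t, (i < k)%nat -> interval_11 t -> Rabs (H i t - F i t) <= eps / 2).
  { induction k as [|k IH]; intros Hkn.
    { exists P. split; [exact HP | intros; lia]. }
    destruct (IH ltac:(lia)) as [H [(HH & Hind & HQ) Hclose]].
    pose proof (Rmin_l 1 (eps / 4)). pose proof (Rmin_r 1 (eps / 4)).
    destruct (GENplus_replace_segment n H k (F k) (Rmin 1 (eps / 4)) ltac:(lia) HH
                (HF k ltac:(lia)) Hind) as [l [Hl HG]].
    - intros a b Ha Hb Hab _ _. now apply HQ.
    - intros i Hi Hik. right. now apply HQ.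
    - split; [apply Rmin_glb_lt|]; lra.
    - eexists. split; [exact HG|]. intros i t Hi Ht. unfold replace_at.
      destruct (Nat.eqb_spec i k) as [->|Hik]; [|apply Hclose; [lia | exact Ht]].
      replace ((1 - l) * F k t + l * H k t - F k t) with (l * (H k t - F k t)) by ring.
      pose proof (in_G_range (H k) t (proj1 (HH k ltac:(lia))) Ht).
      pose proof (in_G_range (F k) t (proj1 (HF k ltac:(lia))) Ht).
      assert (Rabs (H k t - F k t) <= 2) by (apply Rabs_le; solve_interval_11).
      rewrite Rabs_mult, Rabs_pos_eq by lra. nra. }
  destruct (Hk n (Nat.le_refl n)) as [H [HG Hclose]].
  exists H. split; [exact HG|]. intros i Hi. exists (eps / 2). split; [lra|].
  intros t Ht. rewrite Rabs_minus_sym. now apply Hclose.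
Qed.

(** * Tents and bumps *)

Definition tent (w x : R) : R := Rmax 0 (1 - Rabs x / w).

Lemma tent_range w x : 0 < w -> 0 <= tent w x <= 1.
Proof.
  intros Hw. unfold tent. pose proof (Rabs_pos x).
  assert (0 <= Rabs x / w) by (apply Rdiv_le_0_compat; lra).
  unfold Rmax; destruct Rle_dec; lra.
Qed.

Lemma tent_out w x : 0 < w -> w <= Rabs x -> tent w x = 0.
Proof.
  intros Hw Hx. unfold tent. assert (1 <= Rabs x / w).
  { apply Rmult_le_reg_r with w; [exact Hw|]. unfold Rdiv. rewrite Rmult_assoc, Rinv_l; lra. }
  unfold Rmax; destruct Rle_dec; lra.
Qed.

Lemma tent_0 w : 0 < w -> tent w 0 = 1.
Proof.
  intros Hw. unfold tent. rewrite Rabs_R0. unfold Rdiv. rewrite Rmult_0_l.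
  unfold Rmax; destruct Rle_dec; lra.
Qed.

Lemma tent_opp w x : tent w (- x) = tent w x.
Proof. unfold tent. now rewrite Rabs_Ropp. Qed.

Lemma Rabs_tent_sub w x y : 0 < w -> Rabs (tent w x - tent w y) <= Rabs (x - y) / w.
Proof.
  intros Hw. unfold tent.
  assert (A : Rabs (Rabs x / w - Rabs y / w) <= Rabs (x - y) / w).
  { replace (Rabs x / w - Rabs y / w) with ((Rabs x - Rabs y) / w) by (field; lra).
    unfold Rdiv. rewrite Rabs_mult, Rabs_inv, (Rabs_pos_eq w) by lra.
    apply Rmult_le_compat_r; [left; now apply Rinv_0_lt_compat | apply Rabs_triang_inv2]. }
  revert A. generalize (Rabs x / w) (Rabs y / w). intros u v A.
  unfold Rmax; repeat destruct Rle_dec; unfold Rabs in *; repeat destruct Rcase_abs; lra.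
Qed.

Lemma continuity_pt_tent_shift w c x : 0 < w -> continuity_pt (fun t => tent w (t - c)) x.
Proof.
  intros Hw eps Heps. exists (eps * w). split; [now apply Rmult_lt_0_compat|].
  intros y [_ Hy]. simpl in *. unfold R_dist in *.
  eapply Rle_lt_trans; [apply Rabs_tent_sub; exact Hw|].
  replace (y - c - (x - c)) with (y - x) by ring.
  apply Rmult_lt_reg_r with w; [exact Hw|]. unfold Rdiv. rewrite Rmult_assoc, Rinv_l; lra.
Qed.

Lemma continuity_pt_tent w x : 0 < w -> continuity_pt (tent w) x.
Proof.
  intros Hw. apply (continuity_pt_ext (fun t => tent w (t - 0))).
  - intros. now rewrite Rminus_0_r.
  - now apply continuity_pt_tent_shift.
Qed.

Lemma RInt_tent_shift w a : 0 < w -> w <= a -> a + w <= 1 ->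
  RInt (fun t => tent w (t - a)) (-1) 1 = RInt (tent w) (-1) 1.
Proof.
  intros Hw Hwa Haw.
  assert (Hint : forall x y, ex_RInt (tent w) x y)
    by (intros; apply ex_RInt_of_continuity; intros; now apply continuity_pt_tent).
  assert (Hzero : forall x y, x <= y -> (forall t, x < t < y -> tent w t = 0) ->
                  RInt (tent w) x y = 0 :> R).
  { intros x y Hxy H0. rewrite (RInt_ext_R _ (fun _ => 0)), RInt_const_R; [ring|].
    intros t Ht. apply H0. unfold Rmin, Rmax in Ht; destruct Rle_dec; lra. }
  transitivity (RInt (tent w) (-1 - a) (1 - a)).
  - pose proof (RInt_comp_lin (V := R_CompleteNormedModule) (tent w) 1 (- a) (-1) 1) as Hlin.
    replace (1 * -1 + - a) with (-1 - a) in Hlin by ring.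
    replace (1 * 1 + - a) with (1 - a) in Hlin by ring.
    rewrite <- Hlin by apply Hint. apply RInt_ext. intros x _.
    change (tent w (x - a) = 1 * tent w (1 * x + - a)). rewrite !Rmult_1_l. reflexivity.
  - rewrite <- (RInt_Chasles (V := R_CompleteNormedModule) (tent w) (-1 - a) (-1) (1 - a)),
      <- (RInt_Chasles (V := R_CompleteNormedModule) (tent w) (-1) (1 - a) 1) by apply Hint.
    rewrite (Hzero (-1 - a) (-1)), (Hzero (1 - a) 1).
    + change (0 + RInt (tent w) (-1) (1 - a) = RInt (tent w) (-1) (1 - a) + 0). ring.
    + lra.
    + intros t Ht. apply tent_out; [exact Hw|]. rewrite Rabs_pos_eq; lra.
    + lra.
    + intros t Ht. apply tent_out; [exact Hw|]. rewrite Rabs_left; lra.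
Qed.

Definition bump (a w s t : R) : R := t + s * (tent w t - tent w (t - a)).

Lemma Rabs_bump_sub_le a w s x y : 0 < w -> 0 <= s -> 4 * s <= w ->
  Rabs ((bump a w s x - x) - (bump a w s y - y)) <= Rabs (x - y) / 2.
Proof.
  intros Hw Hs Hsw. unfold bump.
  replace (x + s * (tent w x - tent w (x - a)) - x - (y + s * (tent w y - tent w (y - a)) - y))
    with (s * ((tent w x - tent w y) - (tent w (x - a) - tent w (y - a)))) by ring.
  rewrite Rabs_mult, (Rabs_pos_eq s) by lra.
  pose proof (Rabs_tent_sub w x y Hw) as H1. pose proof (Rabs_tent_sub w (x - a) (y - a) Hw) as H2.
  replace (x - a - (y - a)) with (x - y) in H2 by ring.
  pose proof (Rabs_sub_le (tent w x - tent w y) (tent w (x - a) - tent w (y - a))).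
  assert (Hsw' : s * (2 / w) <= 1 / 2)
    by (apply Rmult_le_reg_r with w; [lra | unfold Rdiv; field_simplify; lra]).
  pose proof (Rabs_pos (x - y)).
  apply Rle_trans with (s * (2 / w) * Rabs (x - y)); [|nra].
  replace (s * (2 / w) * Rabs (x - y)) with (s * (Rabs (x - y) / w + Rabs (x - y) / w))
    by (field; lra).
  apply Rmult_le_compat_l; lra.
Qed.

Lemma continuity_pt_bump a w s x : 0 < w -> continuity_pt (bump a w s) x.
Proof.
  intros Hw. apply continuity_pt_plus; [apply continuity_pt_id|].
  apply continuity_pt_scal, continuity_pt_minus;
    [now apply continuity_pt_tent | now apply continuity_pt_tent_shift].
Qed.

Lemma RInt_bump a w s : 0 < w -> w <= a -> a + w <= 1 -> RInt (bump a w s) (-1) 1 = 0 :> R.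
Proof.
  intros Hw Hwa Haw.
  assert (Hid : ex_RInt (fun t => t) (-1) 1)
    by (apply ex_RInt_of_continuity; intros; apply continuity_pt_id).
  assert (Htent : ex_RInt (tent w) (-1) 1)
    by (apply ex_RInt_of_continuity; intros; now apply continuity_pt_tent).
  assert (Hshift : ex_RInt (fun t => tent w (t - a)) (-1) 1)
    by (apply ex_RInt_of_continuity; intros; now apply continuity_pt_tent_shift).
  assert (Hdip : ex_RInt (fun t => tent w t - tent w (t - a)) (-1) 1)
    by now apply (ex_RInt_minus (V := R_NormedModule)).
  rewrite (RInt_ext_R _ (fun t => 1 * t + s * (tent w t - tent w (t - a))))
    by (intros; unfold bump; ring).
  rewrite RInt_lin_R, RInt_minus_R, RInt_id, RInt_tent_shift, Rminus_diag by assumption.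
  lra.
Qed.

Lemma bump_G0 a w s : 0 < w -> w <= a -> a + w <= 1 -> 0 < s -> 4 * s <= w ->
  in_G0 (bump a w s).
Proof.
  intros Hw Hwa Haw Hs Hsw. split; [split; [|split; [|split]]|].
  - intros x y _ _ Hxy. pose proof (Rabs_bump_sub_le a w s y x Hw ltac:(lra) Hsw) as Hlip.
    apply Rabs_le_between in Hlip. rewrite Rabs_pos_eq in Hlip by lra. lra.
  - apply cont_on_11_of_continuity_pt. intros. now apply continuity_pt_bump.
  - unfold bump. rewrite !tent_out by (auto; rewrite Rabs_left; lra). ring.
  - unfold bump. rewrite !tent_out by (auto; rewrite Rabs_pos_eq; lra). ring.
  - now apply RInt_bump.
Qed.

Lemma bump_even_part a w s t :
  even_part (bump a w s) t = s * (tent w t - (tent w (t - a) + tent w (t + a)) / 2).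
Proof.
  unfold even_part, bump. rewrite tent_opp.
  replace (- t - a) with (- (t + a)) by ring. rewrite tent_opp. field.
Qed.

Lemma Rabs_bump_even_part_le a w s t : 0 < w -> 0 <= s -> Rabs (even_part (bump a w s) t) <= s.
Proof.
  intros Hw Hs. rewrite bump_even_part, Rabs_mult, (Rabs_pos_eq s) by exact Hs.
  pose proof (tent_range w t Hw). pose proof (tent_range w (t - a) Hw).
  pose proof (tent_range w (t + a) Hw).
  assert (Rabs (tent w t - (tent w (t - a) + tent w (t + a)) / 2) <= 1) by (apply Rabs_le; lra).
  nra.
Qed.

(** * A first point of GEN+ *)

Definition affine_on (f : R -> R) (a b : R) : Prop :=
  exists al be, forall s, a <= s <= b -> f s = al + be * s.

Lemma RInt_comp_ginv_affine f g a b : in_G f -> in_G g ->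
  interval_11 a -> interval_11 b -> a < b -> affine_on f a b -> affine_on g a b ->
  RInt (fun t => f (ginv g t)) (g a) (g b) = (g b - g a) * (f a + f b) / 2 :> R.
Proof.
  intros Hf Hg Ha Hb Hab [al [be Hfa]] [ga [de Hga]].
  assert (Hgab : g a < g b) by (apply Hg; auto).
  rewrite (Hga a), (Hga b) in Hgab |- * by lra. rewrite (Hfa a), (Hfa b) by lra.
  assert (Hde : 0 < de) by nra.
  (* f (g^-1 t) = al + be (t - ga) / de *)
  rewrite (RInt_ext_R _ (fun t => 1 * (al - be * ga / de) + (be / de) * t)).
  - rewrite (RInt_lin_R _ _ (fun _ => al - be * ga / de) (fun t => t)), RInt_const_R, RInt_id.
    + field. lra.
    + apply (ex_RInt_const (V := R_NormedModule)).
    + apply ex_RInt_of_continuity. intros. apply continuity_pt_id.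
  - intros t Ht. rewrite Rmin_left, Rmax_right in Ht by lra.
    set (s := (t - ga) / de).
    assert (Hs : a < s < b).
    { unfold s. split; apply Rmult_lt_reg_r with de; auto; unfold Rdiv;
        rewrite Rmult_assoc, Rinv_l; lra. }
    assert (Hgs : g s = t) by (rewrite Hga by lra; unfold s; field; lra).
    rewrite <- Hgs at 1. rewrite ginv_l, Hfa by (assumption || lra || solve_interval_11).
    unfold s. field. lra.
Qed.

Lemma RInt_partition h q N :
  (forall k, (k <= N)%nat -> interval_11 (q k)) ->
  (forall a b, interval_11 a -> interval_11 b -> ex_RInt h a b) ->
  RInt h (q O) (q N) = sum_lt N (fun k => RInt h (q k) (q (S k))).
Proof.
  intros Hq Hint. induction N as [|N IH]; simpl.
  - apply (RInt_point (V := R_CompleteNormedModule)).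
  - rewrite <- IH by (intros; apply Hq; lia).
    symmetry. apply (RInt_Chasles (V := R_CompleteNormedModule)); apply Hint; apply Hq; lia.
Qed.

(* For piecewise affine f and g, Q f g = int f dg is computed exactly by the trapezoid rule. *)
Lemma Q_piecewise_affine f g p N : in_G f -> in_G g ->
  p O = -1 -> p N = 1 ->
  (forall k, (k <= N)%nat -> interval_11 (p k)) ->
  (forall k, (k < N)%nat -> p k < p (S k)) ->
  (forall k, (k < N)%nat -> affine_on f (p k) (p (S k)) /\ affine_on g (p k) (p (S k))) ->
  Q f g = sum_lt N (fun k => (g (p (S k)) - g (p k)) * (f (p k) + f (p (S k))) / 2).
Proof.
  intros Hf Hg Hp0 HpN Hp Hlt Haff. pose proof Hg as (_ & _ & Hgm1 & Hg1).
  unfold Q. transitivity (RInt (fun t => f (ginv g t)) (g (p O)) (g (p N)));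
    [now rewrite Hp0, HpN, Hgm1, Hg1|].
  rewrite (RInt_partition _ (fun k => g (p k)) N).
  - apply sum_lt_ext. intros k Hk. destruct (Haff k Hk).
    apply RInt_comp_ginv_affine; auto; apply Hp || apply Hlt; lia.
  - intros k Hk. now apply in_G_range, Hp.
  - intros a b Ha Hb. now apply ex_RInt_comp_ginv.
Qed.

Lemma tent_affine_on w l r : 0 < w -> l <= r ->
  r <= - w \/ (- w <= l /\ r <= 0) \/ (0 <= l /\ r <= w) \/ w <= l ->
  affine_on (tent w) l r.
Proof.
  intros Hw Hlr Hcase.
  assert (Hdiv : forall x, 0 <= x <= w -> 0 <= 1 - x / w).
  { intros x Hx. enough (x / w <= 1) by lra.
    apply Rmult_le_reg_r with w; [exact Hw|]. unfold Rdiv. rewrite Rmult_assoc, Rinv_l; lra. }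
  destruct Hcase as [H|[H|[H|H]]].
  - exists 0, 0. intros x Hx. rewrite tent_out; [ring | exact Hw | rewrite Rabs_left; lra].
  - exists 1, (1 / w). intros x Hx. unfold tent.
    rewrite Rabs_left1, Rmax_right by (lra || apply Hdiv; lra).
    field. lra.
  - exists 1, (- (1 / w)). intros x Hx. unfold tent.
    rewrite Rabs_pos_eq, Rmax_right by (lra || apply Hdiv; lra). field. lra.
  - exists 0, 0. intros x Hx. rewrite tent_out; [ring | exact Hw | rewrite Rabs_pos_eq; lra].
Qed.

Lemma bump_affine_on a w s l r :
  affine_on (tent w) l r -> affine_on (tent w) (l - a) (r - a) -> affine_on (bump a w s) l r.
Proof.
  intros [a1 [b1 H1]] [a2 [b2 H2]].
  exists (s * (a1 - a2 + b2 * a)), (1 + s * (b1 - b2)). intros x Hx. unfold bump.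
  rewrite H1, H2 by lra. ring.
Qed.

Definition bump_pair (i : nat) : R -> R :=
  match i with O => bump (2/3) (1/3) (1/12) | _ => bump (1/3) (1/3) (1/12) end.

Definition bump_pair_node (k : nat) : R :=
  match k with O => -1 | 1 => -1/3 | 2 => 0 | 3 => 1/3 | 4 => 2/3 | _ => 1 end.

Lemma bump_pair_G0 : in_G0n 2 bump_pair.
Proof. intros [|i] _; apply bump_G0; lra. Qed.

(* At the grid points k/3 every tent of width 1/3 takes the value 0 or 1. *)
Ltac grid_tents :=
  repeat match goal with
  | |- context [tent ?w ?x] =>
      first [ replace (tent w x) with 1
                by (replace x with 0 by lra; symmetry; apply tent_0; lra)
            | replace (tent w x) with 0
                by (symmetry; apply tent_out; [lra | unfold Rabs; destruct Rcase_abs; lra]) ]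
  end.

Ltac tent_affine :=
  apply tent_affine_on; [lra | lra |
    first [left; lra | right; left; lra | right; right; left; lra | right; right; right; lra]].

Lemma Q_bump_pair : Q (bump_pair 0) (bump_pair 1) = - (1 / 144).
Proof.
  pose proof (bump_pair_G0 0%nat ltac:(lia)) as [HG0 _].
  pose proof (bump_pair_G0 1%nat ltac:(lia)) as [HG1 _].
  rewrite (Q_piecewise_affine _ _ bump_pair_node 5); auto.
  - simpl. unfold bump. grid_tents. field.
  - intros k Hk. destruct k as [|[|[|[|[|[|k]]]]]]; simpl; solve_interval_11 || lia.
  - intros k Hk. destruct k as [|[|[|[|[|k]]]]]; simpl; lra || lia.
  - intros k Hk. destruct k as [|[|[|[|[|k]]]]]; simpl; try lia;
      split; apply bump_affine_on; tent_affine.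
Qed.

Lemma GENplus_bump_pair : GENplus 2 bump_pair.
Proof.
  split; [exact bump_pair_G0 | split].
  - intros c Hc.
    pose proof (Hc (1/3) ltac:(solve_interval_11)) as H1.
    pose proof (Hc 0 ltac:(solve_interval_11)) as H0.
    simpl in H1, H0. rewrite !bump_even_part in H1, H0.
    revert H1 H0. grid_tents. intros H1 H0.
    assert (c 1%nat = 0) by lra. assert (c 0%nat = 0) by lra.
    intros [|[|i]] Hi; [assumption | assumption | lia].
  - pose proof (bump_pair_G0 0%nat ltac:(lia)) as [HG0 _].
    pose proof (bump_pair_G0 1%nat ltac:(lia)) as [HG1 _].
    intros [|[|i]] [|[|j]] Hi Hj Hij; try lia.
    + rewrite Q_bump_pair. lra.
    + rewrite Q_antisym, Q_bump_pair by assumption. lra.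
Qed.

Lemma GENplus_pred n P : GENplus (S n) P -> GENplus n P.
Proof.
  intros (HP & Hind & HQ). split; [|split].
  - intros i Hi. apply HP. lia.
  - intros c Hc i Hi.
    assert (Hc' : forall t, interval_11 t ->
              lin_comb (S n) (replace_at c n 0) (fun i => even_part (P i)) t = 0).
    { intros t Ht. rewrite lin_comb_replace_last_coef, Rmult_0_l, Rplus_0_r. now apply Hc. }
    pose proof (Hind _ Hc' i ltac:(lia)) as Hci. now rewrite replace_at_neq in Hci by lia.
  - intros i j Hi Hj. apply HQ; lia.
Qed.

Lemma lin_indep_extend n g phi : lin_indep n g ->
  ~ (exists a, forall t, interval_11 t -> lin_comb n a g t = phi t) ->
  lin_indep (S n) (replace_at g n phi).
Proof.
  intros Hind Hspan c Hc.
  assert (Hc' : forall t, interval_11 t -> lin_comb n c g t + c n * phi t = 0)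
    by (intros t Ht; rewrite <- lin_comb_replace_last; auto).
  destruct (Req_dec (c n) 0) as [Hcn|Hcn].
  - assert (Hlt : forall i, (i < n)%nat -> c i = 0).
    { apply Hind. intros t Ht. pose proof (Hc' t Ht) as Ht'. rewrite Hcn in Ht'. lra. }
    intros i Hi. destruct (Nat.eq_dec i n) as [->|Hne]; [exact Hcn | apply Hlt; lia].
  - exfalso. apply Hspan. exists (fun j => - / c n * c j). intros t Ht.
    rewrite lin_comb_scal_coef.
    replace (lin_comb n c g t) with (- (c n * phi t)) by (pose proof (Hc' t Ht); lra).
    field. exact Hcn.
Qed.

Lemma not_in_span_of_jump n g K phi s x y eta : lin_indep_bound n g K ->
  interval_11 x -> interval_11 y -> 0 <= eta ->
  (forall t, interval_11 t -> Rabs (phi t) <= s) ->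
  (forall j, (j < n)%nat -> Rabs (g j x - g j y) <= eta) ->
  K * s * eta < Rabs (phi x - phi y) ->
  ~ (exists a, forall t, interval_11 t -> lin_comb n a g t = phi t).
Proof.
  intros HK Hx Hy Heta Hphi Hg Hjump [a Ha].
  assert (Hsum : sumabs n a <= K * s) by (apply HK; intros t Ht; rewrite Ha; auto).
  assert (Hdiff : Rabs (phi x - phi y) <= sumabs n a * eta).
  { rewrite <- (Ha x Hx), <- (Ha y Hy).
    replace (lin_comb n a g x - lin_comb n a g y)
      with (lin_comb n a (fun j _ => g j x - g j y) 0).
    - apply (lin_comb_bound n a (fun j _ => g j x - g j y)). exact Hg.
    - rewrite (lin_comb_sub n a (fun j _ => g j x) (fun j _ => g j y)).
      now rewrite !lin_comb_eval. }
  pose proof (Rmult_le_compat_r _ _ _ Heta Hsum). lra.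
Qed.

Lemma bump_even_part_jump w s : 0 < w <= 1/4 ->
  even_part (bump (1/2) w s) (1/2 + 2 * w) - even_part (bump (1/2) w s) (1/2) = s / 2.
Proof.
  intros Hw. rewrite !bump_even_part.
  assert (Hout : forall x, w <= x -> tent w x = 0)
    by (intros; apply tent_out; [lra | rewrite Rabs_pos_eq; lra]).
  replace (1/2 - 1/2) with 0 by ring. rewrite tent_0, !Hout by lra. field.
Qed.

(* A narrow bump at 1/2 has an even part jumping by s/2 over a distance 2w; combinations
   of the even parts of P with l^1-norm O(s) cannot jump like that, by equicontinuity. *)
Lemma even_parts_extend n P : in_G0n n P -> lin_indep n (fun i => even_part (P i)) ->
  exists R, in_G0 R /\ lin_indep (S n) (fun i => even_part (replace_at P n R i)).
Proof.
  intros HP Hind. set (g := fun i => even_part (P i)).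
  destruct (lin_indep_bound_exists n g 1) as [K HK];
    [intros; now apply Rabs_even_part_le; [apply HP|] | exact Hind |].
  set (eta := / (4 * (Rabs K + 1))).
  assert (HK1 : 0 < 4 * (Rabs K + 1)) by (pose proof (Rabs_pos K); lra).
  assert (Heta : 0 < eta) by now apply Rinv_0_lt_compat.
  assert (HKeta : K * eta < 1 / 2).
  { apply Rle_lt_trans with (Rabs K * eta); [apply Rmult_le_compat_r; [lra | apply Rle_abs]|].
    apply Rmult_lt_reg_r with (4 * (Rabs K + 1)); [exact HK1|].
    unfold eta. rewrite Rmult_assoc, Rinv_l by lra. lra. }
  destruct (ex_pos_forall_lt n (fun j d => forall y, interval_11 y -> Rabs (y - 1/2) < d ->
                                 Rabs (g j y - g j (1/2)) <= eta)) as [d [Hd Hequi]].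
  { intros j e e' _ He' Hjd y Hy Hyd. apply Hjd; [exact Hy | lra]. }
  { intros j Hj. pose proof (HP j Hj) as [(_ & Hc & _) _].
    destruct (cont_on_11_even_part _ Hc (1/2) ltac:(solve_interval_11) eta Heta) as [d [Hd Hcd]].
    exists d. split; [exact Hd|]. intros y Hy Hyd. left. now apply Hcd. }
  set (w := Rmin d (1/4) / 4). set (s := w / 4).
  assert (Hw : 0 < w /\ w <= 1/16 /\ 2 * w < d)
    by (unfold w; pose proof (Rmin_l d (1/4)); pose proof (Rmin_r d (1/4));
        pose proof (Rmin_glb_lt d (1/4) 0 Hd ltac:(lra)); lra).
  assert (Hs : 0 < s) by (unfold s; lra).
  exists (bump (1/2) w s). split; [apply bump_G0; unfold s; lra|].
  apply (lin_indep_ext (S n) (replace_at g n (even_part (bump (1/2) w s)))).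
  2: { intros i t Hi Ht. unfold replace_at, g. now destruct (Nat.eqb i n). }
  apply lin_indep_extend; [exact Hind|].
  apply (not_in_span_of_jump n g K _ s (1/2 + 2 * w) (1/2) eta HK);
    [solve_interval_11 | solve_interval_11 | lra | | |].
  - intros t _. apply Rabs_bump_even_part_le; lra.
  - intros j Hj. apply Hequi; [exact Hj | solve_interval_11 |]. rewrite Rabs_pos_eq; lra.
  - rewrite bump_even_part_jump, Rabs_pos_eq by lra. nra.
Qed.

Lemma GENplus_succ n P : (2 <= n)%nat -> GENplus n P -> exists P', GENplus (S n) P'.
Proof.
  intros Hn (HP & Hind & HQ).
  destruct (even_parts_extend n P HP Hind) as [R [HR HRind]].
  assert (HP0 : in_G0 (P O)) by (apply HP; lia).
  assert (HP1 : in_G0 (P 1%nat)) by (apply HP; lia).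
  set (X := fun mu t => (1 - mu) * P O t + mu * P 1%nat t).
  destruct (avoid_finitely_many n (fun i mu => Q (X mu) (P i) = 0)) with (eps := 1)
    as [mu [Hmu Hgood]]; [|lra|].
  { intros i x y Hi Bx By. unfold X in Bx, By.
    rewrite Q_linear_l in Bx, By by (apply HP0 || apply HP1 || apply HP; lia).
    apply (affine_root_unique (Q (P O) (P i)) (Q (P 1%nat) (P i))); auto.
    destruct (Nat.eq_dec i O) as [->|Hi0]; [right | left]; apply HQ; lia. }
  destruct (GENplus_replace_segment (S n) (replace_at P n R) n (X mu) 1) as [l [_ HG]].
  - lia.
  - intros i Hi. unfold replace_at. destruct (Nat.eqb_spec i n); [exact HR | apply HP; lia].
  - apply in_G0_convex; auto. lra.
  - exact HRind.
  - intros a b Ha Hb Hab Han Hbn. rewrite !replace_at_neq by assumption. apply HQ; lia.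
  - intros i Hi Hin. left. rewrite replace_at_neq by exact Hin. apply Hgood. lia.
  - lra.
  - eexists. exact HG.
Qed.

Lemma GENplus_exists n : (0 < n)%nat -> exists P, GENplus n P.
Proof.
  intros Hn.
  assert (Hge2 : forall m, (2 <= m)%nat -> exists P, GENplus m P).
  { induction m as [|m IH]; intros Hm; [lia|].
    destruct (Nat.eq_dec m 1) as [->|Hm1]; [exists bump_pair; exact GENplus_bump_pair|].
    destruct IH as [P HP]; [lia|]. apply (GENplus_succ m P); [lia | exact HP]. }
  destruct (Nat.eq_dec n 1) as [->|Hn1]; [|apply Hge2; lia].
  exists bump_pair. apply GENplus_pred, GENplus_bump_pair.
Qed.

Theorem proposition4p10 (n : nat) (hn : (0 < n)%nat) :
  (forall F, GENplus n F -> GEN n F) /\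
  (dense_in_G0n n (GENplus n) /\ Gdelta_in_G0n n (GENplus n)) /\
  (dense_in_G0n n (GEN n) /\ Gdelta_in_G0n n (GEN n)).
Proof.
  destruct (GENplus_exists n hn) as [P HP].
  split; [exact (GENplus_GEN n) | split; split].
  - split; [now intros F [HF _] | exact (GENplus_dense_of n P HP)].
  - apply Gdelta_of_open, GENplus_open.
  - split; [now intros F [HF _]|].
    intros F eps HF Heps. destruct (GENplus_dense_of n P HP F eps HF Heps) as [H [HG Hb]].
    exists H. split; [now apply GENplus_GEN | exact Hb].
  - apply Gdelta_of_open, GEN_open.
Qed.
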